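(* Let $\overline{\mathcal{O}}$, $\varphi$ be as in the context, let $K$ be a complete non-Archimedean field, and let $F:\overline{\mathcal{O}}\to K$ be a continuous non-vanishing function. Suppose that for all $n\in\mathbb{N}$ and all $\mathbf{x}=(\mathbf{x}_t)_t\in\overline{\mathcal{O}}$ with $|\mathbf{x}_t|<1$ for all $t$, $$\varphi^{(n)}(-\mathbf{x})=-\mathbf{x}\ \Longrightarrow\ \prod_{j=0}^{n-1}F\left(-\varphi^{(j)}(-\mathbf{x})\right)=1.$$ Then there exists a continuous non-vanishing function $G:\overline{\mathcal{O}}\to K$ such that $F(\mathbf{x})=\dfrac{G(\mathbf{x})}{G(-\varphi(-\mathbf{x}))}$ for all $\mathbf{x}\in\overline{\mathcal{O}}$.
   Context: Let $q$ be a prime power, $A=\mathbb{F}_q[\theta]$, $k=\mathbb{F}_q(\theta)$. Let $\mathcal{O}=\prod_t\mathcal{O}_t$ be a finite product with each $\mathcal{O}_t\in\{\mathbb{Z},A\}$; for each $t$ fix a prime number $p_t$ (if $\mathcal{O}_t=\mathbb{Z}$, with $\overline{\mathcal{O}}_t=\mathbb{Z}_{p_t}$) or a monic irreducible $v_t\in A$ (if $\mathcal{O}_t=A$, with $\overline{\mathcal{O}}_t=A_{v_t}$ the $v_t$-adic completion), and $\overline{\mathcal{O}}=\prod_t\overline{\mathcal{O}}_t$. Fix $\pi_t$ a positive power of $p_t$ resp. $v_t$. Each $\mathbf{x}_t\in\overline{\mathcal{O}}_t$ is uniquely $\sum_{i\ge0}x_{t,i}\pi_t^i$ with integer digits $0\le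 x_{t,i}<\pi_t$ (case $\mathbb{Z}$) or polynomial digits of degree $<\deg\pi_t$ (case $A$); $\varphi_t(\mathbf{x}_t)=\sum_{i\ge0}x_{t,i+1}\pi_t^i$ and $\varphi(\mathbf{x})=(\varphi_t(\mathbf{x}_t))_t$; $\varphi^{(j)}$ is the $j$-fold iterate. If $\varphi^{(n)}(\mathbf{y})=\mathbf{y}$ then each component $\mathbf{y}_t$ is an element of $\mathbb{Q}$ resp. $k$ (a ratio of an element of $\mathcal{O}_t$ and $1-\pi_t^n$); here $|\cdot|$ denotes the usual real absolute value on $\mathbb{Q}$ and the $\infty$-adic absolute value $|f/g|=q^{\deg f-\deg g}$ on $k$. *)

From HB Require Import structures.
From mathcomp Require Import all_boot all_order all_algebra.
From mathcomp Require Import reals.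
Set Implicit Arguments. Unset Strict Implicit. Unset Printing Implicit Defensive.
Import Order.TTheory GRing.Theory Num.Theory.
Local Open Scope ring_scope.

(* ---------- Components of type Z_p : elements are digit sequences d with 0 <= d i < pi,
   representing  sum_i d i * pi^i  (pi = p^e). ---------- *)

Definition trZ (pi : int) (d : nat -> int) (k : nat) : int :=
  \sum_(i < k) d i * pi ^+ i.

Definition digitsZ (pi : int) (d : nat -> int) : Prop :=
  forall i, 0 <= d i < pi.

(* digits of -x: the (i)th digit of the canonical representative of -x mod pi^(i+1) *)
Definition negZ (pi : int) (d : nat -> int) : nat -> int :=
  fun i => (((- trZ pi d i.+1) %% (pi ^+ i.+1))%Z %/ (pi ^+ i))%Z.

(* x is the rational a/b (b*x = a in Z_p) with |a/b| < 1 for the real absolute value *)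
Definition ratZ_lt1 (pi : int) (d : nat -> int) : Prop :=
  exists a b : int, b != 0 /\ (forall k, (pi ^+ k %| b * trZ pi d k - a)%Z) /\ `|a| < `|b|.

(* ---------- Components of type A_v (A = F_q[theta]) : digit sequences of polynomials
   of degree < deg pi (pi = v^e). ---------- *)

Definition trP (Fq : fieldType) (pi : {poly Fq}) (d : nat -> {poly Fq}) (k : nat) : {poly Fq} :=
  \sum_(i < k) d i * pi ^+ i.

Definition digitsP (Fq : fieldType) (pi : {poly Fq}) (d : nat -> {poly Fq}) : Prop :=
  forall i, (size (d i) < size pi)%N.

Definition negP (Fq : fieldType) (pi : {poly Fq}) (d : nat -> {poly Fq}) : nat -> {poly Fq} :=
  fun i => ((- trP pi d i.+1) %% (pi ^+ i.+1)) %/ (pi ^+ i).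

(* x is the element a/b of k = F_q(theta) (b*x = a in A_v) with |a/b|_oo < 1, i.e. deg a < deg b *)
Definition ratP_lt1 (Fq : fieldType) (pi : {poly Fq}) (d : nat -> {poly Fq}) : Prop :=
  exists a b : {poly Fq}, b != 0 /\ (forall k, pi ^+ k %| b * trP pi d k - a) /\
     (size a < size b)%N.

Definition phiD (T : Type) (d : nat -> T) : nat -> T := fun i => d i.+1.

(* ---------- The product Obar = prod_{t in I1} Z_{p_t} x prod_{t in I2} A_{v_t} ---------- *)

Definition pt (I1 I2 : finType) (Fq : fieldType) : Type :=
  ((I1 -> nat -> int) * (I2 -> nat -> {poly Fq}))%type.

Section Prod.
Variables (I1 I2 : finType) (Fq : fieldType).
Variables (piZ : I1 -> int) (piP : I2 -> {poly Fq}).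

Definition inO (x : pt I1 I2 Fq) : Prop :=
  (forall t, digitsZ (piZ t) (x.1 t)) /\ (forall t, digitsP (piP t) (x.2 t)).

Definition negO (x : pt I1 I2 Fq) : pt I1 I2 Fq :=
  (fun t => negZ (piZ t) (x.1 t), fun t => negP (piP t) (x.2 t)).

Definition phiO (x : pt I1 I2 Fq) : pt I1 I2 Fq :=
  (fun t => phiD (x.1 t), fun t => phiD (x.2 t)).

Definition eqO (x y : pt I1 I2 Fq) : Prop :=
  (forall t i, x.1 t i = y.1 t i) /\ (forall t i, x.2 t i = y.2 t i).

Definition agreeO (N : nat) (x y : pt I1 I2 Fq) : Prop :=
  (forall t i, (i < N)%N -> x.1 t i = y.1 t i) /\
  (forall t i, (i < N)%N -> x.2 t i = y.2 t i).

Definition smallO (x : pt I1 I2 Fq) : Prop :=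
  (forall t, ratZ_lt1 (piZ t) (x.1 t)) /\ (forall t, ratP_lt1 (piP t) (x.2 t)).

(* continuity of f : Obar -> K (product of adic topologies) w.r.t. the absolute value ab *)
Definition continuousO (R : realType) (K : fieldType) (ab : K -> R)
  (f : pt I1 I2 Fq -> K) : Prop :=
  forall x, inO x -> forall eps : R, 0 < eps ->
    exists N : nat, forall y, inO y -> agreeO N x y -> ab (f y - f x) < eps.
End Prod.

Definition nonarch_abs (R : realType) (K : fieldType) (ab : K -> R) : Prop :=
  [/\ ab 0 = 0, (forall x, x != 0 -> 0 < ab x),
      (forall x y, ab (x * y) = ab x * ab y) &
      (forall x y, ab (x + y) <= Num.max (ab x) (ab y))].

Definition complete_abs (R : realType) (K : fieldType) (ab : K -> R) : Prop :=
  forall u : nat -> K,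
    (forall eps : R, 0 < eps -> exists N, forall m n, (N <= m)%N -> (N <= n)%N ->
        ab (u m - u n) < eps) ->
    exists l : K, forall eps : R, 0 < eps -> exists N, forall n, (N <= n)%N ->
        ab (u n - l) < eps.

From Pilot Require Import Defs.
From HB Require Import structures.
From mathcomp Require Import all_boot all_order all_algebra.
From mathcomp Require Import reals.
From mathcomp Require Import zify ring lra.
From Stdlib Require Import FunctionalExtensionality ClassicalEpsilon.
Import Order.TTheory GRing.Theory Num.Theory.
Local Open Scope ring_scope.

Set Implicit Arguments. Unset Strict Implicit. Unset Printing Implicit Defensive.

(* Put H(y) := F(-y); then G(x) := Q(-x)^-1 works as soon as Q is continuous, non-vanishing
   and satisfies Q(phi y) = H(y) Q(y).  Take Q(y) := prod_{i >= 1} H(pi^i y): the factors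
   tend to H(0) = 1 uniformly in y (continuity of H at 0, and 0 is a fixed point of phi), so
   in a non-Archimedean complete field the product converges to a continuous non-vanishing
   function.  If only the first m digits of u are non-zero, the digit sequence z_n repeating
   those m digits followed by n zeros is phi-periodic of period m + n, and -z_n is a rational
   of absolute value < 1; the hypothesis on the orbit of z_n reads
     prod_{j < m} H(phi^j z_n) * prod_{1 <= i <= n} H(pi^i z_n) = 1,
   and letting n -> oo gives Q(u) prod_{j < m} H(phi^j u) = 1.  Comparing this identity for
   u and phi u gives Q(phi u) = H(u) Q(u) for finitely supported u, hence for all u by
   continuity. *)

Section DigitsZ.
Variable pi : int.
Hypothesis pi_gt1 : 1 < pi.

Lemma piX_gt0 k : 0 < pi ^+ k.
Proof. by apply: exprn_gt0; apply: lt_trans pi_gt1. Qed.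

Lemma piX_neq0 k : pi ^+ k != 0.
Proof. by rewrite gt_eqF ?piX_gt0. Qed.

Lemma trZS d k : trZ pi d k.+1 = trZ pi d k + d k * pi ^+ k.
Proof. by rewrite /trZ big_ord_recr. Qed.

Lemma trZ_splitD d k N :
  trZ pi d (k + N) = trZ pi d k + pi ^+ k * trZ pi (fun i => d (k + i)%N) N.
Proof.
rewrite /trZ big_split_ord /= mulr_sumr; congr (_ + _).
by apply: eq_bigr => i _ /=; rewrite exprD; ring.
Qed.

Lemma trZ_bound d : digitsZ pi d -> forall k, 0 <= trZ pi d k < pi ^+ k.
Proof.
move=> hd; elim=> [|k IH]; first by rewrite /trZ big_ord0 expr0.
rewrite trZS exprS; have := hd k; have := piX_gt0 k.
move: IH; set P := pi ^+ k; set T := trZ pi d k; set a := d k => IH h1 h2.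
nia.
Qed.

Lemma trZ_inj d e : (forall k, trZ pi d k = trZ pi e k) -> forall i, d i = e i.
Proof.
move=> h i; have := h i.+1; rewrite !trZS h => /addrI /mulIf; apply.
exact: piX_neq0.
Qed.

Lemma modz_trZN_bound d k : 0 <= ((- trZ pi d k) %% pi ^+ k)%Z < pi ^+ k.
Proof. by rewrite modz_ge0 ?piX_neq0 ?ltz_pmod ?piX_gt0. Qed.

Lemma modz_trZNS d k :
  (((- trZ pi d k.+1) %% pi ^+ k.+1)%Z %% pi ^+ k)%Z = ((- trZ pi d k) %% pi ^+ k)%Z.
Proof.
rewrite -[RHS](modz_small (modz_trZN_bound d k)); apply/eqP.
rewrite eqz_mod_dvd /modz; apply/dvdzP.
exists (- d k - ((- trZ pi d k.+1) %/ pi ^+ k.+1)%Z * pi + ((- trZ pi d k) %/ pi ^+ k)%Z).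
by rewrite trZS exprS; ring.
Qed.

Lemma trZ_negZ d k : trZ pi (negZ pi d) k = ((- trZ pi d k) %% pi ^+ k)%Z.
Proof.
elim: k => [|k IH]; first by rewrite /trZ big_ord0 expr0 modz1.
by rewrite trZS IH -(modz_trZNS d k) /negZ addrC -divz_eq.
Qed.

Lemma negZ_digits d : digitsZ pi (negZ pi d).
Proof.
move=> i; rewrite /negZ; have /andP [h1 h2] := modz_trZN_bound d i.+1.
by rewrite divz_ge0 ?piX_gt0 // h1 /= ltz_divLR ?piX_gt0 // -exprS.
Qed.

Lemma negZK d : digitsZ pi d -> forall i, negZ pi (negZ pi d) i = d i.
Proof.
move=> hd; apply: trZ_inj => k; rewrite !trZ_negZ.
have := modzNm (- trZ pi d k) (pi ^+ k); rewrite opprK => ->.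
by rewrite modz_small // trZ_bound.
Qed.

Lemma negZ_prefix d e i :
  (forall j, (j <= i)%N -> d j = e j) -> negZ pi d i = negZ pi e i.
Proof.
move=> h; rewrite /negZ; congr (((- _) %% _)%Z %/ _)%Z.
by apply: eq_bigr => j _; rewrite h // -ltnS.
Qed.

(* A digit sequence of period N represents -a / (pi^N - 1) with a := trZ pi d N, and
   |a| < pi^N - 1 as soon as the last digit of the period vanishes. *)
Lemma ratZ_lt1_negZ d N : digitsZ pi d -> (0 < N)%N ->
  (forall k, d (k + N)%N = d k) -> d N.-1 = 0 -> ratZ_lt1 pi (negZ pi d).
Proof.
move=> hd hN hper hz; have hNS : N = N.-1.+1 by rewrite prednK.
exists (trZ pi d N), (pi ^+ N - 1); split; [|split].
- rewrite subr_eq0; apply/eqP => h.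
  have : pi ^+ 1 <= pi ^+ N by rewrite ler_eXn2l.
  rewrite h expr1; lia.
- move=> k; rewrite trZ_negZ.
  have hrot : trZ pi d N = trZ pi d k + pi ^+ k * trZ pi (fun i => d (k + i)%N) N
                           - pi ^+ N * trZ pi d k.
    have := trZ_splitD d N k; rewrite addnC trZ_splitD.
    have -> : trZ pi (fun i => d (N + i)%N) k = trZ pi d k.
      by apply: eq_bigr => i _; rewrite addnC hper.
    by move=> ->; ring.
  rewrite /modz hrot; apply/dvdzP.
  exists (- trZ pi (fun i => d (k + i)%N) N - (pi ^+ N - 1) * ((- trZ pi d k) %/ pi ^+ k)%Z).
  ring.
- rewrite hNS trZS hz mul0r addr0.
  have /andP [h1 h2] := trZ_bound hd N.-1.
  have h3 : pi ^+ N.-1 <= pi ^+ N - 1.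
    by have := piX_gt0 N.-1; rewrite [in pi ^+ N]hNS exprS; nia.
  rewrite -hNS !ger0_norm //; lia.
Qed.

End DigitsZ.

Section DigitsP.
Variable Fq : fieldType.
Variable pi : {poly Fq}.
Hypothesis pi_gt1 : (1 < size pi)%N.

Lemma piXP_neq0 k : pi ^+ k != 0.
Proof. by rewrite expf_neq0 // -size_poly_gt0 ltnW. Qed.

Lemma deg_pi_gt0 : (0 < (size pi).-1)%N.
Proof. by rewrite -ltnS prednK // ltnW. Qed.

Lemma size_piX k : size (pi ^+ k) = ((size pi).-1 * k).+1.
Proof. by rewrite -size_exp prednK // size_poly_gt0 piXP_neq0. Qed.

Lemma trPS d k : trP pi d k.+1 = trP pi d k + d k * pi ^+ k.
Proof. by rewrite /trP big_ord_recr. Qed.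

Lemma trP_splitD d k N :
  trP pi d (k + N) = trP pi d k + pi ^+ k * trP pi (fun i => d (k + i)%N) N.
Proof.
rewrite /trP big_split_ord /= mulr_sumr; congr (_ + _).
by apply: eq_bigr => i _ /=; rewrite exprD; ring.
Qed.

Lemma trP_bound d : digitsP pi d -> forall k, (size (trP pi d k) < size (pi ^+ k))%N.
Proof.
have spi : size pi = (size pi).-1.+1 by rewrite prednK // ltnW.
have := deg_pi_gt0; move=> hs hd; elim=> [|k IH]; first by rewrite /trP big_ord0 expr0 size_poly0 size_poly1.
rewrite trPS; apply: leq_ltn_trans (size_polyD _ _) _; rewrite gtn_max.
apply/andP; split; first by apply: (ltn_trans IH); rewrite !size_piX; nia.
apply: leq_ltn_trans (size_polyMleq _ _) _.
by have := hd k; rewrite !size_piX spi /=; nia.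
Qed.

(* In A_v there are no carries: the digits of -x are the negated digits of x. *)
Lemma negPE d : digitsP pi d -> forall i, Defs.negP pi d i = - d i.
Proof.
move=> hd i; rewrite /Defs.negP modNp modp_small ?trP_bound // trPS opprD divpD.
rewrite divpN divp_small ?trP_bound // oppr0 add0r -mulNr mulpK //.
exact: piXP_neq0.
Qed.

Lemma negP_digits d : digitsP pi d -> digitsP pi (Defs.negP pi d).
Proof. by move=> hd i; rewrite negPE // size_polyN. Qed.

Lemma negPK d : digitsP pi d -> forall i, Defs.negP pi (Defs.negP pi d) i = d i.
Proof. by move=> hd i; rewrite (negPE (negP_digits hd)) (negPE hd) opprK. Qed.

Lemma negP_prefix d e i :
  (forall j, (j <= i)%N -> d j = e j) -> Defs.negP pi d i = Defs.negP pi e i.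
Proof.
move=> h; rewrite /Defs.negP; congr (((- _) %% _) %/ _).
by apply: eq_bigr => j _; rewrite h // -ltnS.
Qed.

Lemma ratP_lt1_negP d N : digitsP pi d -> (0 < N)%N ->
  (forall k, d (k + N)%N = d k) -> ratP_lt1 pi (Defs.negP pi d).
Proof.
move=> hd hN hper.
have hb : size (pi ^+ N - 1) = size (pi ^+ N).
  by rewrite size_polyDl // size_polyN size_poly1 size_piX; have := deg_pi_gt0; nia.
exists (trP pi d N), (pi ^+ N - 1); split; [|split].
- by rewrite -size_poly_gt0 hb size_poly_gt0 piXP_neq0.
- move=> k.
  have -> : trP pi (Defs.negP pi d) k = - trP pi d k.
    by rewrite /trP -sumrN; apply: eq_bigr => i _; rewrite negPE // mulNr.
  have hrot : trP pi d N = trP pi d k + pi ^+ k * trP pi (fun i => d (k + i)%N) N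
                           - pi ^+ N * trP pi d k.
    have := trP_splitD d N k; rewrite addnC trP_splitD.
    have -> : trP pi (fun i => d (N + i)%N) k = trP pi d k.
      by apply: eq_bigr => i _; rewrite addnC hper.
    by move=> ->; ring.
  by apply/dvdpP; exists (- trP pi (fun i => d (k + i)%N) N); rewrite hrot; ring.
- by rewrite hb trP_bound.
Qed.

End DigitsP.

Lemma piZ_gt1 (p e : nat) : prime p -> (0 < e)%N -> 1 < ((p ^ e)%N)%:Z.
Proof.
move=> hp he; rewrite ltz_nat; apply: leq_trans (prime_gt1 hp) _.
by rewrite -{1}(expn1 p) leq_exp2l ?prime_gt1.
Qed.

Lemma size_piP_gt1 (Fq : fieldType) (v : {poly Fq}) e :
  irreducible_poly v -> (0 < e)%N -> (1 < size (v ^+ e))%N.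
Proof.
move=> [hv1 _] he; have hv0 : v != 0 by rewrite -size_poly_gt0 ltnW.
have hs : (0 < size (v ^+ e))%N by rewrite size_poly_gt0 expf_neq0.
rewrite -(prednK hs) size_exp ltnS muln_gt0 he andbT.
by rewrite -ltnS prednK // ltnW.
Qed.

Section Obar.
Variables (I1 I2 : finType) (Fq : fieldType).
Variables (piZ : I1 -> int) (piP : I2 -> {poly Fq}).
Hypothesis piZ_gt1 : forall t, 1 < piZ t.
Hypothesis piP_gt1 : forall t, (1 < size (piP t))%N.

Local Notation pt := (pt I1 I2 Fq).
Local Notation inO := (inO piZ piP).
Local Notation negO := (negO piZ piP).
Local Notation phiO := (@phiO I1 I2 Fq).
Local Notation agreeO := (@agreeO I1 I2 Fq).

Definition zeroO : pt := (fun _ _ => 0, fun _ _ => 0).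

(* The digit sequence of pi^i w. *)
Definition shiftO (i : nat) (w : pt) : pt :=
  (fun t k => if (k < i)%N then 0 else w.1 t (k - i)%N,
   fun t k => if (k < i)%N then 0 else w.2 t (k - i)%N).

Definition truncO (m : nat) (w : pt) : pt :=
  (fun t k => if (k < m)%N then w.1 t k else 0,
   fun t k => if (k < m)%N then w.2 t k else 0).

(* The periodic point with period u_0 ... u_(m-1) 0 ... 0 (n zeros). *)
Definition periodO (m n : nat) (u : pt) : pt :=
  (fun t k => if (k %% (m + n) < m)%N then u.1 t (k %% (m + n))%N else 0,
   fun t k => if (k %% (m + n) < m)%N then u.2 t (k %% (m + n))%N else 0).

Definition suppO (m : nat) (u : pt) : Prop :=
  (forall t k, (m <= k)%N -> u.1 t k = 0) /\ (forall t k, (m <= k)%N -> u.2 t k = 0).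

Lemma eqO_eq (x y : pt) : eqO x y -> x = y.
Proof.
case: x y => [x1 x2] [y1 y2] [h1 h2] /=.
congr (_, _); apply: functional_extensionality => t;
  apply: functional_extensionality => i; [exact: h1 | exact: h2].
Qed.

Lemma iter_phiO1 j (x : pt) t k : (iter j phiO x).1 t k = x.1 t (k + j)%N.
Proof. by elim: j k => [|j IH] k /=; rewrite ?addn0 // /phiD IH addSnnS. Qed.

Lemma iter_phiO2 j (x : pt) t k : (iter j phiO x).2 t k = x.2 t (k + j)%N.
Proof. by elim: j k => [|j IH] k /=; rewrite ?addn0 // /phiD IH addSnnS. Qed.

Lemma agreeO_le N M (x y : pt) : (M <= N)%N -> agreeO N x y -> agreeO M x y.
Proof.
by move=> hMN [h1 h2]; split=> t i hi; [apply: h1 | apply: h2]; apply: leq_trans hi hMN.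
Qed.

Lemma agreeO_iter N j (x y : pt) :
  agreeO (N + j) x y -> agreeO N (iter j phiO x) (iter j phiO y).
Proof.
by move=> [h1 h2]; split=> t i hi; rewrite ?iter_phiO1 ?iter_phiO2; [apply: h1 | apply: h2]; lia.
Qed.

Lemma agreeO_shift N i (x y : pt) : agreeO N x y -> agreeO (N + i) (shiftO i x) (shiftO i y).
Proof.
move=> [h1 h2]; split=> t k hk /=; case: ifP => // hki;
  [apply: h1 | apply: h2]; move/negbT: hki; lia.
Qed.

Lemma agreeO_zero_shift i (w : pt) : agreeO i zeroO (shiftO i w).
Proof. by split=> t k hk /=; rewrite hk. Qed.

Lemma agreeO_trunc m (y : pt) : agreeO m y (truncO m y).
Proof. by split=> t k hk /=; rewrite hk. Qed.

Lemma agreeO_neg N (x y : pt) : agreeO N x y -> agreeO N (negO x) (negO y).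
Proof.
move=> [h1 h2]; split=> t i hi /=.
  by apply: negZ_prefix => j hj; apply: h1; lia.
by apply: negP_prefix => j hj; apply: h2; lia.
Qed.

Lemma suppO_trunc m (y : pt) : suppO m (truncO m y).
Proof. by split=> t k hk /=; rewrite ltnNge hk. Qed.

Lemma suppO_phi m (u : pt) : suppO m u -> suppO m (phiO u).
Proof. by move=> [h1 h2]; split=> t k hk /=; rewrite /phiD; [apply: h1 | apply: h2]; lia. Qed.

Lemma suppO_le m M (u : pt) : (m <= M)%N -> suppO m u -> suppO M u.
Proof. by move=> hm [h1 h2]; split=> t k hk; [apply: h1 | apply: h2]; lia. Qed.

Lemma inO_phi (x : pt) : inO x -> inO (phiO x).
Proof. by move=> [h1 h2]; split=> t i /=; rewrite /phiD; [apply: h1 | apply: h2]. Qed.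

Lemma inO_iter j (x : pt) : inO x -> inO (iter j phiO x).
Proof. by elim: j => //= j IH hx; apply/inO_phi/IH. Qed.

Lemma inO_zero : inO zeroO.
Proof.
split=> t i /=; first by have := piZ_gt1 t; lia.
by rewrite size_poly0; apply: ltn_trans (piP_gt1 t).
Qed.

Lemma inO_shift i (w : pt) : inO w -> inO (shiftO i w).
Proof.
move=> [h1 h2]; have [z1 z2] := inO_zero.
by split=> t k /=; case: ifP => _; [apply: z1 | apply: h1 | apply: z2 | apply: h2].
Qed.

Lemma inO_trunc m (w : pt) : inO w -> inO (truncO m w).
Proof.
move=> [h1 h2]; have [z1 z2] := inO_zero.
by split=> t k /=; case: ifP => _; [apply: h1 | apply: z1 | apply: h2 | apply: z2].
Qed.

Lemma inO_period m n (w : pt) : inO w -> inO (periodO m n w).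
Proof.
move=> [h1 h2]; have [z1 z2] := inO_zero.
by split=> t k /=; case: ifP => _; [apply: h1 | apply: z1 | apply: h2 | apply: z2].
Qed.

Lemma inO_neg (x : pt) : inO x -> inO (negO x).
Proof. by move=> [h1 h2]; split=> t /=; [apply: negZ_digits | apply: negP_digits]. Qed.

Lemma negOK (x : pt) : inO x -> negO (negO x) = x.
Proof.
by move=> [h1 h2]; apply: eqO_eq; split=> t i /=; [apply: negZK | apply: negPK].
Qed.

Lemma agreeO_period m n (u : pt) : suppO m u -> agreeO (m + n) u (periodO m n u).
Proof.
move=> [h1 h2]; split=> t k hk /=; rewrite modn_small //;
  case: ifP => [_ //| /negbT]; rewrite -leqNgt => hmk; [exact: h1 | exact: h2].
Qed.

Lemma periodO_periodic m n (u : pt) : eqO (iter (m + n) phiO (periodO m n u)) (periodO m n u).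
Proof. by split=> t k; rewrite ?iter_phiO1 ?iter_phiO2 /= modnDr. Qed.

Lemma iter_periodO m n k (u : pt) : (k < n)%N ->
  iter (m + k) phiO (periodO m n u) = shiftO (n - k) (periodO m n u).
Proof.
move=> hk; apply: eqO_eq; split=> t i; rewrite ?iter_phiO1 ?iter_phiO2 /=;
 (case: (ltnP i (n - k)) => hi;
 [ rewrite modn_small; [rewrite ifF //; apply/negbTE; rewrite -leqNgt; lia | lia]
 | have -> : (i + (m + k) = (i - (n - k)) + (m + n))%N by lia];
 by rewrite modnDr).
Qed.

Lemma smallO_neg_periodO m n (u : pt) :
  inO u -> (0 < n)%N -> smallO piZ piP (negO (periodO m n u)).
Proof.
move=> hu hn; have [h1 h2] := inO_period m n hu.
split=> t /=.
- apply: (ratZ_lt1_negZ (piZ_gt1 t) (h1 t) (N := (m + n)%N)); first lia.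
    by move=> k /=; rewrite modnDr.
  rewrite /= modn_small; last lia.
  by rewrite ifF //; apply/negbTE; rewrite -leqNgt; lia.
- apply: (ratP_lt1_negP (piP_gt1 t) (h2 t) (N := (m + n)%N)); first lia.
  by move=> k /=; rewrite modnDr.
Qed.

Lemma periodO_orbit_prod (K : pzSemiRingType) (F : pt -> K) :
  (forall n x, inO x -> smallO piZ piP x -> eqO (iter n phiO (negO x)) (negO x) ->
     \prod_(j < n) F (negO (iter j phiO (negO x))) = 1) ->
  forall m n u, inO u -> (0 < n)%N ->
  \prod_(j < m + n) F (negO (iter j phiO (periodO m n u))) = 1.
Proof.
move=> hF m n u hu hn; have hz := inO_period m n hu.
have := hF (m + n)%N _ (inO_neg hz) (smallO_neg_periodO m hu hn).
by rewrite (negOK hz); apply; apply: periodO_periodic.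
Qed.

End Obar.

Section NonArchimedean.
Variables (R : realType) (K : fieldType) (ab : K -> R).
Hypothesis Hab : nonarch_abs ab.

Lemma ab0 : ab 0 = 0. Proof. by case: Hab. Qed.
Lemma ab_gt0 x : x != 0 -> 0 < ab x. Proof. by case: Hab => _ h _ _; apply: h. Qed.
Lemma abM x y : ab (x * y) = ab x * ab y. Proof. by case: Hab. Qed.
Lemma ab_ultra x y : ab (x + y) <= Num.max (ab x) (ab y). Proof. by case: Hab. Qed.

Lemma ab_ge0 x : 0 <= ab x.
Proof. by have [->|/ab_gt0/ltW //] := eqVneq x 0; rewrite ab0. Qed.

Lemma ab1 : ab 1 = 1.
Proof.
have h := abM 1 1; rewrite mulr1 in h.
have hp : 0 < ab 1 by apply: ab_gt0; exact: oner_neq0.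
by apply: (mulfI (lt0r_neq0 hp)); rewrite mulr1 -h.
Qed.

Lemma abN x : ab (- x) = ab x.
Proof.
have abN1 : ab (-1) = 1.
  have h := abM (-1) (-1); rewrite mulrNN mulr1 ab1 in h.
  have hp : 0 < ab (-1) by apply: ab_gt0; rewrite oppr_eq0 oner_neq0.
  nra.
by rewrite -mulN1r abM abN1 mul1r.
Qed.

Lemma abB x y : ab (x - y) = ab (y - x).
Proof. by rewrite -abN opprB. Qed.

Lemma abD_lt x y e : ab x < e -> ab y < e -> ab (x + y) < e.
Proof. by move=> h1 h2; apply: le_lt_trans (ab_ultra x y) _; rewrite gt_max h1 h2. Qed.

Lemma ab_le_maxB x y : ab x <= Num.max (ab y) (ab (x - y)).
Proof. by have := ab_ultra y (x - y); rewrite addrC subrK. Qed.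

Lemma ab_isosceles x y : ab (x - y) < ab y -> ab x = ab y.
Proof.
move=> h; apply/eqP; rewrite eq_le; apply/andP; split.
  by apply: le_trans (ab_le_maxB x y) _; rewrite ge_max lexx /= ltW.
have := ab_le_maxB y x; rewrite le_max abB => /orP [//|h']; exfalso.
by move: (lt_le_trans h h'); rewrite ltxx.
Qed.

Lemma ab_near1 a : ab (a - 1) < 1 -> ab a = 1.
Proof. by move=> h; rewrite -ab1; apply: ab_isosceles; rewrite ab1. Qed.

Lemma ab_eq0 x : (forall e, 0 < e -> ab x < e) -> x = 0.
Proof.
move=> h; apply/eqP; apply: contraT => hx.
by have := h _ (ab_gt0 hx); rewrite ltxx.
Qed.

Lemma abV x : x != 0 -> ab (x^-1) = (ab x)^-1.
Proof.
move=> hx; have := abM x x^-1; rewrite mulfV // ab1 => h.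
have hp := ab_gt0 hx.
by apply: (mulfI (lt0r_neq0 hp)); rewrite -h mulfV // lt0r_neq0.
Qed.

Lemma near1_mul a b e :
  e <= 1 -> ab (a - 1) < e -> ab (b - 1) < e -> ab (a * b - 1) < e.
Proof.
move=> he ha hb.
have -> : a * b - 1 = a * (b - 1) + (a - 1) by ring.
apply: abD_lt => //; rewrite abM ab_near1; last exact: lt_le_trans ha he.
by rewrite mul1r.
Qed.

Lemma prod_near1 (I : Type) (r : seq I) (P : pred I) (f : I -> K) e : 0 < e -> e <= 1 ->
  (forall i, P i -> ab (f i - 1) < e) -> ab (\prod_(i <- r | P i) f i - 1) < e.
Proof.
move=> he0 he1 h; apply: (big_ind (fun a => ab (a - 1) < e)) => //.
- by rewrite subrr ab0.
- by move=> a b; apply: near1_mul.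
Qed.

Definition is_lim (u : nat -> K) (l : K) :=
  forall e : R, 0 < e -> exists N, forall n, (N <= n)%N -> ab (u n - l) < e.

End NonArchimedean.

Lemma shrink_eps (R : realType) (C e : R) : 0 <= C -> 0 < e ->
  [/\ 0 < e / (C + e + 1), e / (C + e + 1) <= 1 & C * (e / (C + e + 1)) < e].
Proof.
move=> hC he; have hD : 0 < C + e + 1 by lra.
split; first by rewrite divr_gt0.
  by rewrite ler_pdivrMr // mul1r; lra.
by rewrite mulrA ltr_pdivrMr //; nra.
Qed.

Section Continuity.
Variables (I1 I2 : finType) (Fq : fieldType).
Variables (piZ : I1 -> int) (piP : I2 -> {poly Fq}).
Hypothesis piZ_gt1 : forall t, 1 < piZ t.
Hypothesis piP_gt1 : forall t, (1 < size (piP t))%N.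
Variables (R : realType) (K : fieldType) (ab : K -> R).
Hypothesis Hab : nonarch_abs ab.

Local Notation pt := (pt I1 I2 Fq).
Local Notation inO := (inO piZ piP).
Local Notation negO := (negO piZ piP).
Local Notation agreeO := (@agreeO I1 I2 Fq).

Definition contAt (f : pt -> K) (x : pt) : Prop :=
  forall eps : R, 0 < eps ->
    exists N : nat, forall y, inO y -> agreeO N x y -> ab (f y - f x) < eps.

Lemma contAt_ext f g x : f =1 g -> contAt f x -> contAt g x.
Proof.
move=> hfg hf e he; have [N hN] := hf e he; exists N => y hy hxy.
by rewrite -!hfg; apply: hN.
Qed.

Lemma contAt_cst c x : contAt (fun _ => c) x.
Proof. by move=> e he; exists 0%N => y _ _; rewrite subrr ab0. Qed.

Lemma contAt_mul f g x : contAt f x -> contAt g x -> contAt (fun y => f y * g y) x.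
Proof.
move=> hf hg e he.
set C := ab (f x) + 1; set D := ab (g x) + 1.
have hfx := ab_ge0 Hab (f x); have hgx := ab_ge0 Hab (g x).
have hC : 0 < C by rewrite /C; lra.
have hD : 0 < D by rewrite /D; lra.
have he1 : 0 < Num.min 1 (e / D) by rewrite lt_min ltr01 divr_gt0.
have he2 : 0 < e / C by rewrite divr_gt0.
have [N1 h1] := hf _ he1; have [N2 h2] := hg _ he2.
exists (maxn N1 N2) => y hy hxy.
have := h1 y hy (agreeO_le (leq_maxl _ _) hxy); rewrite lt_min => /andP [hf1 hf2].
have hg1 := h2 y hy (agreeO_le (leq_maxr _ _) hxy).
have -> : f y * g y - f x * g x = f y * (g y - g x) + (f y - f x) * g x by ring.
apply: (abD_lt Hab); rewrite (abM Hab).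
- have hfy : ab (f y) <= C.
    by apply: le_trans (ab_le_maxB Hab (f y) (f x)) _; rewrite ge_max /C; apply/andP; split; lra.
  have := ab_ge0 Hab (g y - g x); have := ab_ge0 Hab (f y).
  have : C * (e / C) = e by rewrite mulrC divfK // lt0r_neq0.
  nra.
- have := ab_ge0 Hab (f y - f x).
  have : e / D * D = e by rewrite divfK // lt0r_neq0.
  rewrite /D in hf2 * => hh; nra.
Qed.

Lemma contAt_prod (f : nat -> pt -> K) m x :
  (forall j, (j < m)%N -> contAt (f j) x) -> contAt (fun y => \prod_(j < m) f j y) x.
Proof.
elim: m => [|m IH] h.
  by apply: (@contAt_ext (fun _ => 1)) => [y|]; rewrite ?big_ord0 //; apply: contAt_cst.
apply: (@contAt_ext (fun y => (\prod_(j < m) f j y) * f m y)).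
  by move=> y; rewrite big_ord_recr.
apply: contAt_mul; last exact: h.
by apply: IH => j hj; apply/h/ltnW.
Qed.

Lemma contAt_comp (g : pt -> pt) c f x :
  (forall y, inO y -> inO (g y)) ->
  (forall N y, agreeO (N + c) x y -> agreeO N (g x) (g y)) ->
  contAt f (g x) -> contAt (fun y => f (g y)) x.
Proof.
move=> hg hag hf e he; have [N hN] := hf e he; exists (N + c)%N => y hy hxy.
by apply: hN; [apply: hg | apply: hag].
Qed.

Lemma contAt_negO f x : contAt f (negO x) -> contAt (fun y => f (negO y)) x.
Proof.
apply: (contAt_comp (c := 0%N)) => [y|N y]; first exact: inO_neg.
by rewrite addn0; apply: agreeO_neg.
Qed.

Lemma contAt_inv f x : f x != 0 -> contAt f x -> contAt (fun y => (f y)^-1) x.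
Proof.
move=> hx hf e he.
set C := ab (f x).
have hC : 0 < C by apply: (ab_gt0 Hab).
have he1 : 0 < Num.min C (e * C * C) by rewrite lt_min hC !mulr_gt0.
have [N hN] := hf _ he1; exists N => y hy hxy.
have := hN y hy hxy; rewrite lt_min => /andP [h1 h2].
have hfy : ab (f y) = C by apply: (ab_isosceles Hab).
have hy0 : f y != 0 by apply: contraTneq hC => h0; rewrite -hfy h0 (ab0 Hab) ltxx.
have -> : (f y)^-1 - (f x)^-1 = (f x - f y) * ((f y)^-1 * (f x)^-1).
  by rewrite mulrBl mulrCA mulfV // mulr1 mulrA mulfV // mul1r.
rewrite !(abM Hab) !(abV Hab) // hfy (abB Hab) -/C.
have hCi : C^-1 * C^-1 * (C * C) = 1 by field; apply: lt0r_neq0.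
have := ab_ge0 Hab (f y - f x).
have hi : 0 < C^-1 by rewrite invr_gt0.
nra.
Qed.

End Continuity.

Section InfiniteProduct.
Variables (I1 I2 : finType) (Fq : fieldType).
Variables (piZ : I1 -> int) (piP : I2 -> {poly Fq}).
Hypothesis piZ_gt1 : forall t, 1 < piZ t.
Hypothesis piP_gt1 : forall t, (1 < size (piP t))%N.
Variables (R : realType) (K : fieldType) (ab : K -> R).
Hypothesis Hab : nonarch_abs ab.
Hypothesis Hcomp : complete_abs ab.

Local Notation pt := (pt I1 I2 Fq).
Local Notation inO := (inO piZ piP).
Local Notation phiO := (@phiO I1 I2 Fq).
Local Notation agreeO := (@agreeO I1 I2 Fq).
Local Notation contAt := (contAt piZ piP ab).
Local Notation zeroO := (zeroO I1 I2 Fq).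

Variable H : pt -> K.
Hypothesis H_cont : forall x, inO x -> contAt H x.
Hypothesis H_neq0 : forall x, inO x -> H x != 0.
Hypothesis H_periodic : forall m n u, inO u -> (0 < n)%N ->
  \prod_(j < m + n) H (iter j phiO (periodO m n u)) = 1.

Definition partial_prod (n : nat) (w : pt) : K := \prod_(0 <= i < n) H (shiftO i.+1 w).

Definition infinite_prod (w : pt) : K :=
  epsilon (inhabits 0) (is_lim ab (partial_prod ^~ w)).

Definition orbit_prod (m : nat) (w : pt) : K := \prod_(j < m) H (iter j phiO w).

Lemma H_zero : H zeroO = 1.
Proof.
have := H_periodic 0 (inO_zero piZ_gt1 piP_gt1) (ltn0Sn 0); rewrite big_ord1 /=.
by congr (H _ = _); apply: eqO_eq; split=> t i /=; rewrite ltn0.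
Qed.

Lemma H_shiftO_near1 e : 0 < e ->
  exists I, forall w, inO w -> forall i, (I <= i)%N -> ab (H (shiftO i w) - 1) < e.
Proof.
move=> he; have [N hN] := H_cont (inO_zero piZ_gt1 piP_gt1) he; exists N => w hw i hi.
rewrite -H_zero; apply: hN; first exact: inO_shift.
exact: agreeO_le hi (agreeO_zero_shift i w).
Qed.

Lemma partial_prod_tail_near1 e : 0 < e -> e <= 1 ->
  exists I, forall w, inO w -> forall a b, (I <= a)%N ->
  ab (\prod_(a <= i < b) H (shiftO i.+1 w) - 1) < e.
Proof.
move=> he0 he1; have [I hI] := H_shiftO_near1 he0; exists I => w hw a b ha.
rewrite big_nat_cond; apply: (prod_near1 Hab) => // i /andP [/andP [hai _] _].
by apply: hI => //; lia.
Qed.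

Lemma partial_prod_split a b w : (a <= b)%N ->
  partial_prod b w = partial_prod a w * \prod_(a <= i < b) H (shiftO i.+1 w).
Proof. by move=> hab; rewrite /partial_prod (@big_cat_nat _ _ _ a 0 b). Qed.

Lemma partial_prod_neq0 n w : inO w -> partial_prod n w != 0.
Proof.
move=> hw; apply: (big_ind (fun a => a != 0)) => [|a b ha hb|i _].
- exact: oner_neq0.
- by rewrite mulf_neq0.
- exact/H_neq0/inO_shift.
Qed.

Lemma partial_prod_cont n w : inO w -> contAt (partial_prod n) w.
Proof.
move=> hw; apply: (contAt_ext (f := fun y => \prod_(j < n) H (shiftO j.+1 y))).
  by move=> y; rewrite /partial_prod big_mkord.
apply: (contAt_prod Hab (f := fun j y => H (shiftO j.+1 y))) => j _.
apply: (contAt_comp (g := shiftO j.+1) (c := 0%N)).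
- by move=> y hy; apply: inO_shift.
- by move=> N y; rewrite addn0 => /(agreeO_shift j.+1); apply: agreeO_le; apply: leq_addr.
- exact/H_cont/inO_shift.
Qed.

Lemma ab_partial_prod_stable w : inO w ->
  exists I0, forall n, (I0 <= n)%N -> ab (partial_prod n w) = ab (partial_prod I0 w).
Proof.
move=> hw; have [I hI] := partial_prod_tail_near1 ltr01 (lexx 1); exists I => n hn.
rewrite (partial_prod_split _ hn) (abM Hab) [X in _ * X](ab_near1 Hab) ?mulr1 //.
exact: hI.
Qed.

Lemma partial_prod_cauchy w : inO w -> forall e : R, 0 < e -> exists N, forall a b,
  (N <= a)%N -> (a <= b)%N -> ab (partial_prod b w - partial_prod a w) < e.
Proof.
move=> hw e he; have [I0 hI0] := ab_partial_prod_stable hw.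
have [h1 h2 h3] := shrink_eps (ab_ge0 Hab (partial_prod I0 w)) he.
have [I hI] := partial_prod_tail_near1 h1 h2.
exists (maxn I0 I) => a b ha hab; rewrite (partial_prod_split _ hab).
rewrite -[X in _ - X]mulr1 -mulrBr (abM Hab) hI0; last exact: leq_trans (leq_maxl _ _) ha.
apply: le_lt_trans h3; apply: ler_wpM2l; first exact: ab_ge0.
by apply/ltW/hI => //; apply: leq_trans (leq_maxr _ _) ha.
Qed.

Lemma infinite_prod_lim w : inO w -> is_lim ab (partial_prod ^~ w) (infinite_prod w).
Proof.
move=> hw; apply: epsilon_spec; apply: Hcomp => e he.
have [N hN] := partial_prod_cauchy hw he; exists N => m n hm hn.
by case: (leqP m n) => hmn; [rewrite (abB Hab); apply: hN | apply/hN/ltnW].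
Qed.

Lemma partial_prod_lim_near w : inO w -> forall e : R, 0 < e ->
  exists N, forall n w', (N <= n)%N -> inO w' -> agreeO N w w' ->
  ab (partial_prod n w' - infinite_prod w) < e.
Proof.
move=> hw e he.
have [N1 hN1] := infinite_prod_lim hw he.
have [I0 hI0] := ab_partial_prod_stable hw.
set C := ab (partial_prod I0 w).
have [h1 h2 h3] := shrink_eps (ab_ge0 Hab (partial_prod I0 w)) he.
have [I hI] := partial_prod_tail_near1 h1 h2.
set I' := maxn I0 I.
have [N2 hN2] := partial_prod_cont I' hw he.
exists (maxn (maxn N1 I') N2) => n w' hn hw' hww'.
have hnI' : (I' <= n)%N by move: hn; lia.
have -> : partial_prod n w' - infinite_prod w =
  (partial_prod n w' - partial_prod n w) + (partial_prod n w - infinite_prod w) by ring.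
apply: (abD_lt Hab); last by apply: hN1; move: hn; lia.
rewrite (partial_prod_split _ hnI') (partial_prod_split w hnI').
set R1 := \prod_(I' <= i < n) H (shiftO i.+1 w').
set R2 := \prod_(I' <= i < n) H (shiftO i.+1 w).
have hR1 : ab (R1 - 1) < e / (C + e + 1) by apply: hI => //; apply: leq_maxr.
have hR2 : ab (R2 - 1) < e / (C + e + 1) by apply: hI => //; apply: leq_maxr.
have -> : partial_prod I' w' * R1 - partial_prod I' w * R2 =
  (partial_prod I' w' - partial_prod I' w) * R1 + partial_prod I' w * (R1 - R2) by ring.
apply: (abD_lt Hab); rewrite (abM Hab).
  rewrite [X in _ * X](ab_near1 Hab) ?mulr1; last exact: lt_le_trans hR1 h2.
  by apply: hN2 => //; apply: agreeO_le hww'; lia.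
rewrite hI0; last exact: leq_maxl.
have hR : ab (R1 - R2) < e / (C + e + 1).
  have -> : R1 - R2 = (R1 - 1) + - (R2 - 1) by ring.
  by apply: (abD_lt Hab); rewrite ?(abN Hab).
by apply: le_lt_trans h3; apply: ler_wpM2l; [apply: ab_ge0 | apply: ltW].
Qed.

Lemma infinite_prod_cont w : inO w -> contAt infinite_prod w.
Proof.
move=> hw e he; have [N hN] := partial_prod_lim_near hw he; exists N => y hy hwy.
have [N' hN'] := infinite_prod_lim hy he.
have -> : infinite_prod y - infinite_prod w = (infinite_prod y - partial_prod (maxn N N') y)
  + (partial_prod (maxn N N') y - infinite_prod w) by ring.
apply: (abD_lt Hab).
  by rewrite (abB Hab); apply: hN'; apply: leq_maxr.
by apply: hN => //; apply: leq_maxl.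
Qed.

Lemma infinite_prod_neq0 w : inO w -> infinite_prod w != 0.
Proof.
move=> hw; have [I0 hI0] := ab_partial_prod_stable hw.
have hC : 0 < ab (partial_prod I0 w) by apply/(ab_gt0 Hab)/partial_prod_neq0.
have [N hN] := infinite_prod_lim hw hC.
apply/eqP => hQ; have := hN (maxn N I0) (leq_maxl _ _).
by rewrite hQ subr0 hI0 ?ltxx // leq_maxr.
Qed.

Lemma orbit_prod_cont m u : inO u -> contAt (orbit_prod m) u.
Proof.
move=> hu; apply: (contAt_prod Hab (f := fun j w => H (iter j phiO w))) => j _.
apply: (contAt_comp (g := iter j phiO) (c := j)).
- by move=> y hy; apply: inO_iter.
- by move=> N y hy; apply: agreeO_iter.
- exact/H_cont/inO_iter.
Qed.

Lemma orbit_prod_periodO m n u : inO u -> (0 < n)%N ->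
  orbit_prod m (periodO m n u) * partial_prod n (periodO m n u) = 1.
Proof.
move=> hu hn; rewrite -(H_periodic m hu hn) big_split_ord /=; congr (_ * _).
rewrite /partial_prod big_nat_rev big_mkord; apply: eq_bigr => i _ /=.
by rewrite iter_periodO //; congr (H (shiftO _ _)); have := ltn_ord i; lia.
Qed.

Lemma infinite_prod_orbit_prod m u : inO u -> suppO m u -> infinite_prod u * orbit_prod m u = 1.
Proof.
move=> hu hs; apply/eqP; rewrite -subr_eq0; apply/eqP; apply: (ab_eq0 Hab) => e he.
set L := orbit_prod m u; set D := ab (infinite_prod u).
have hD0 : 0 <= D := ab_ge0 Hab _.
have [h1 h2 h3] := shrink_eps (ab_ge0 Hab L) he.
have hD1 : 0 <= D + 1 by lra.
have [g1 g2 g3] := shrink_eps hD1 he.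
have [N1 hN1] := partial_prod_lim_near hu h1.
have [N2 hN2] := orbit_prod_cont m hu g1.
set n := (N1 + N2).+1; set z := periodO m n u.
have hz : inO z := inO_period piZ_gt1 piP_gt1 m n hu.
have hag : agreeO (m + n) u z := agreeO_period n hs.
have hP : ab (partial_prod n z - infinite_prod u) < e / (ab L + e + 1).
  by apply: hN1 => //; [rewrite /n; lia | apply: agreeO_le hag; rewrite /n; lia].
have hA : ab (orbit_prod m z - L) < e / (D + 1 + e + 1).
  by apply: hN2 => //; apply: agreeO_le hag; rewrite /n; lia.
rewrite -(orbit_prod_periodO m hu (ltn0Sn (N1 + N2))) -/n -/z.
have -> : infinite_prod u * L - orbit_prod m z * partial_prod n z =
  (infinite_prod u - partial_prod n z) * L + partial_prod n z * (L - orbit_prod m z) by ring.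
apply: (abD_lt Hab); rewrite (abM Hab).
  rewrite (abB Hab); apply: le_lt_trans h3; rewrite mulrC.
  by apply: ler_wpM2l; [apply: ab_ge0 | apply: ltW].
have hPn : ab (partial_prod n z) <= D + 1.
  apply: le_trans (ab_le_maxB Hab _ (infinite_prod u)) _.
  rewrite ge_max -/D; apply/andP; split; first lra.
  by apply: le_trans (ltW hP) _; apply: le_trans h2 _; lra.
apply: le_lt_trans g3; rewrite (abB Hab).
by apply: ler_pM => //; [apply: ab_ge0 | apply: ab_ge0 | apply: ltW].
Qed.

Lemma infinite_prod_phiO_trunc M y : inO y ->
  infinite_prod (phiO (truncO M y)) = H (truncO M y) * infinite_prod (truncO M y).
Proof.
move=> hy; set u := truncO M y.
have hu : inO u := inO_trunc piZ_gt1 piP_gt1 M hy.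
have hs : suppO M u := suppO_trunc M y.
have h1 := infinite_prod_orbit_prod hu (suppO_le (leqnSn M) hs).
have h2 := infinite_prod_orbit_prod (inO_phi hu) (suppO_phi hs).
have hL : orbit_prod M.+1 u = H u * orbit_prod M (phiO u).
  by rewrite /orbit_prod big_ord_recl; congr (_ * _); apply: eq_bigr => i _; rewrite iterSr.
have hL0 : orbit_prod M (phiO u) != 0.
  by apply: contra_eq_neq h2 => ->; rewrite mulr0 eq_sym oner_neq0.
by apply: (mulIf hL0); rewrite h2 -h1 hL; ring.
Qed.

Lemma infinite_prod_phiO y : inO y -> infinite_prod (phiO y) = H y * infinite_prod y.
Proof.
move=> hy; apply/eqP; rewrite -subr_eq0; apply/eqP; apply: (ab_eq0 Hab) => e he.
have [N1 hN1] := contAt_mul Hab (H_cont hy) (infinite_prod_cont hy) he.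
have [N2 hN2] := infinite_prod_cont (inO_phi hy) he.
set M := (N1 + N2).+1; set u := truncO M y.
have hu : inO u := inO_trunc piZ_gt1 piP_gt1 M hy.
have hag : agreeO M y u := agreeO_trunc M y.
have hag2 : agreeO N2 (phiO y) (phiO u).
  by apply: (@agreeO_iter _ _ _ N2 1); apply: agreeO_le hag; rewrite /M; lia.
have -> : infinite_prod (phiO y) - H y * infinite_prod y =
  (infinite_prod (phiO y) - infinite_prod (phiO u)) + (H u * infinite_prod u - H y * infinite_prod y).
  by rewrite infinite_prod_phiO_trunc //; ring.
apply: (abD_lt Hab).
  by rewrite (abB Hab); apply: hN2 => //; apply: inO_phi.
by apply: hN1 => //; apply: agreeO_le hag; rewrite /M; lia.
Qed.

End InfiniteProduct.

Unset Implicit Arguments. Set Strict Implicit.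

Theorem mainTheorem3
  (Fq : finFieldType) (I1 I2 : finType)
  (p : I1 -> nat) (e1 : I1 -> nat) (v : I2 -> {poly Fq}) (e2 : I2 -> nat)
  (R : realType) (K : fieldType) (ab : K -> R)
  (F : pt I1 I2 Fq -> K) :
  (forall t, prime (p t)) -> (forall t, (0 < e1 t)%N) ->
  (forall t, v t \is monic) -> (forall t, irreducible_poly (v t)) ->
  (forall t, (0 < e2 t)%N) ->
  nonarch_abs ab -> complete_abs ab ->
  let piZ := fun t => ((p t ^ e1 t)%N)%:Z in
  let piP := fun t => v t ^+ e2 t in
  continuousO piZ piP ab F ->
  (forall x, inO piZ piP x -> F x != 0) ->
  (forall (n : nat) (x : pt I1 I2 Fq), inO piZ piP x -> smallO piZ piP x ->
     eqO (iter n (@phiO I1 I2 Fq) (negO piZ piP x)) (negO piZ piP x) ->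
     \prod_(j < n) F (negO piZ piP (iter j (@phiO I1 I2 Fq) (negO piZ piP x))) = 1) ->
  exists G : pt I1 I2 Fq -> K,
    [/\ continuousO piZ piP ab G,
        (forall x, inO piZ piP x -> G x != 0) &
        (forall x, inO piZ piP x -> F x = G x / G (negO piZ piP (phiO (negO piZ piP x))))].
Proof.
move=> hp he1 _ hirr he2 Hab Hcomp piZ piP Fc Fnz Fper.
have hpiZ t : 1 < piZ t := piZ_gt1 (hp t) (he1 t).
have hpiP t : (1 < size (piP t))%N := size_piP_gt1 (hirr t) (he2 t).
pose H y := F (negO piZ piP y).
have Hc y : inO piZ piP y -> contAt piZ piP ab H y.
  by move=> hy; apply: (contAt_negO hpiZ hpiP); apply/Fc/inO_neg.
have Hnz y : inO piZ piP y -> H y != 0 by move=> hy; apply/Fnz/inO_neg.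
have Hper := periodO_orbit_prod hpiZ hpiP Fper.
pose Q := infinite_prod ab H.
have Qnz : forall y, inO piZ piP y -> Q y != 0 :=
  infinite_prod_neq0 hpiZ hpiP Hab Hcomp Hc Hnz Hper.
exists (fun x => (Q (negO piZ piP x))^-1); split=> x hx.
- apply: (contAt_inv Hab); first exact/Qnz/inO_neg.
  apply: (contAt_negO hpiZ hpiP).
  exact/(infinite_prod_cont hpiZ hpiP Hab Hcomp Hc Hper)/inO_neg.
- by rewrite invr_eq0; apply/Qnz/inO_neg.
- have hy := inO_neg hpiZ hpiP hx.
  have hQ : Q (negO piZ piP x) != 0 := Qnz _ hy.
  rewrite (negOK hpiZ hpiP); last exact: inO_phi.
  rewrite [Q (phiO _)](infinite_prod_phiO hpiZ hpiP Hab Hcomp Hc Hper) //.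
  by rewrite invrK mulrCA mulVf // mulr1 /H (negOK hpiZ hpiP).
Qed.
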